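(* Consider the AdaDROPS scheme described in the context (with either Option I or Option II), let $\bar{\mathcal{I}}$ be the set at which $\mathcal{I}^{(k)}$ eventually stabilizes, and assume the iterates $x^{(k)}$ converge to some $\tilde{x}\in\mathbb{R}^n$. Let $\tilde\beta=-\frac1\lambda A^\top(A\tilde{x}-y)$, $\bar L=L-P_{T_z(\bar{\mathcal{I}})}LP_{T(\bar{\mathcal{I}})^\perp}$ and $\bar u=\bar L(\bar L^\top\bar L)^{-1}\tilde\beta$. Then $\|\bar u_{J_t}\|\le1$ for every $t\in\{1,\dots,N\}\setminus\bar{\mathcal{I}}$.
   Context: Let $n,N\in\mathbb{N}$, let $G_1,\dots,G_N\subseteq\{1,\dots,n\}$ be nonempty groups, possibly overlapping, with $\bigcup_iG_i=\{1,\dots,n\}$, and weights $w_i>0$. $x_G$ is the subvector of $x$ indexed by $G$ (increasing order). Let $p=\sum_i|G_i|$, partition $\{1,\dots,p\}$ into consecutive blocks $J_i=\{\sum_{j<i}|G_j|+1,\dots,\sum_{j\le i}|G_j|\}$, and define $L\in\mathbb{R}^{p\times n}$ by $(Lx)_{J_i}=w_ix_{G_i}$; $\|z\|_{1,2}=\sum_i\|z_{J_i}\|$ (Euclidean). Let $A\in\mathbb{R}^{m\times n}$, $y\in\mathbb{R}^m$, $\lambda>0$. For $\mathcal{I}\subseteq\{1,\dots,N\}$: $\mathcal{E}(\mathcal{I})=\{1,\dots,n\}\setminus\bigcup_{t\notin\mathcal{I}}G_t$, $T(\mathcal{I})=\{x:\mathrm{supp}(x)\subseteq\mathcal{E}(\mathcal{I})\}$,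 $\mathcal{E}_z(\mathcal{I})=\bigcup_{t\in\mathcal{I}}J_t$, $T_z(\mathcal{I})=\{z:\mathrm{supp}(z)\subseteq\mathcal{E}_z(\mathcal{I})\}$, $\widehat{L}(\mathcal{I})=L-P_{T_z(\mathcal{I})}LP_{T(\mathcal{I})^\perp}$, with $P_T$ the orthogonal (coordinate) projection onto $T$; $\widehat{L}(\mathcal{I})^\top\widehat{L}(\mathcal{I})$ is invertible. AdaDROPS scheme: from $\mathcal{I}^{(0)}$, $x^{(0)}$, at step $k$ an inner solver produces $x^{(k+1)}$ (for the problem $\min_x\frac1{2\lambda}\|AP_{T(\mathcal{I}^{(k)})}x-y\|^2+\|LP_{T(\mathcal{I}^{(k)})}x\|_{1,2}$); with $\beta^{(k+1)}=-\frac1\lambda A^\top(Ax^{(k+1)}-y)$ the index set is updated by Option I: $\mathcal{I}^{(k+1)}=\mathcal{I}^{(k)}\cup\{t:\|\beta^{(k+1)}_{G_t}\|\ge w_t\}$, or Option II: with $u^{(k+1)}=\widehat{L}(\mathcal{I}^{(k)})(\widehat{L}(\mathcal{I}^{(k)})^\top\widehat{L}(\mathcal{I}^{(k)}))^{-1}\beta^{(k+1)}$, $\mathcal{I}^{(k+1)}=\mathcal{I}^{(k)}\cup\{t:\|u^{(k+1)}_{J_t}\|\ge1\}$. The nondecreasing sequence $\mathcal{I}^{(k)}$ stabilizes at some $\bar{\mathcal{I}}$. *)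

From mathcomp Require Import all_boot all_algebra all_classical all_reals all_analysis.
Import Num.Theory numFieldNormedType.Exports.
Unset Printing Implicit Defensive.
Local Open Scope ring_scope.

Section AdaDROPS.
Variables (R : realType) (n N : nat).
Variable (G : 'I_N -> {set 'I_n}).
Variable (w : 'I_N -> R).

Definition pdim : nat := (\sum_(i < N) #|G i|)%N.

(* first (0-based) row of block J_i : sum_{j<i} |G_j| *)
Definition bstart (i : 'I_N) : nat := (\sum_(j < N | (j < i)%N) #|G j|)%N.

Definition Jblk (i : 'I_N) : {set 'I_pdim} :=
  [set r : 'I_pdim | (bstart i <= r < bstart i + #|G i|)%N].

(* L : (L x)_{J_i} = w_i x_{G_i}, with G_i enumerated in increasing order:
   row  bstart i + o  of L is  w_i * e_{(o-th smallest element of G_i)}^T *)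
Definition Lmx : 'M[R]_(pdim, n) :=
  \matrix_(r < pdim, c < n)
    \sum_(i < N)
      (if (bstart i <= r < bstart i + #|G i|)%N
          && (val c == nth 0%N (map val (enum (G i))) (r - bstart i))
       then w i else 0).

Definition Eset (I : {set 'I_N}) : {set 'I_n} :=
  ~: \bigcup_(t | t \notin I) G t.

Definition Ezset (I : {set 'I_N}) : {set 'I_pdim} :=
  \bigcup_(t in I) Jblk t.

Definition coordproj m (S : {set 'I_m}) : 'M[R]_m :=
  \matrix_(i < m, j < m) (if (i == j) && (i \in S) then 1 else 0).

Definition P_T (I : {set 'I_N}) : 'M[R]_n := coordproj _ (Eset I).
Definition P_Tperp (I : {set 'I_N}) : 'M[R]_n := coordproj _ (~: Eset I).
Definition P_Tz (I : {set 'I_N}) : 'M[R]_pdim := coordproj _ (Ezset I).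

Definition Lhat (I : {set 'I_N}) : 'M[R]_(pdim, n) :=
  Lmx - P_Tz I *m Lmx *m P_Tperp I.

Definition gnorm (v : 'cV[R]_n) (t : 'I_N) : R :=
  Num.sqrt (\sum_(j in G t) (v j 0) ^+ 2).
Definition jnorm (z : 'cV[R]_pdim) (t : 'I_N) : R :=
  Num.sqrt (\sum_(r in Jblk t) (z r 0) ^+ 2).

Definition betaof m (A : 'M[R]_(m, n)) (y : 'cV[R]_m) (lambda : R)
  (x : 'cV[R]_n) : 'cV[R]_n :=
  - (lambda^-1 *: (A^T *m (A *m x - y))).

Definition uof (I : {set 'I_N}) (beta : 'cV[R]_n) : 'cV[R]_pdim :=
  Lhat I *m invmx ((Lhat I)^T *m Lhat I) *m beta.

Definition updateI (I : {set 'I_N}) (beta : 'cV[R]_n) : {set 'I_N} :=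
  I :|: [set t | w t <= gnorm beta t].

Definition updateII (I : {set 'I_N}) (beta : 'cV[R]_n) : {set 'I_N} :=
  I :|: [set t | 1 <= jnorm (uof I beta) t].

End AdaDROPS.

Arguments pdim {n N} G.
Arguments bstart {n N} G i.
Arguments Jblk {n N} G i.
Arguments Lmx {R n N} G w.
Arguments Eset {n N} G I.
Arguments Ezset {n N} G I.
Arguments coordproj {R} m S.
Arguments P_T {R n N} G I.
Arguments P_Tperp {R n N} G I.
Arguments P_Tz {R n N} G I.
Arguments Lhat {R n N} G w I.
Arguments gnorm {R n N} G v t.
Arguments jnorm {R n N} G z t.
Arguments betaof {R n} m A y lambda x.
Arguments uof {R n N} G w I beta.
Arguments updateI {R n N} G w I beta.
Arguments updateII {R n N} G w I beta.

(* Every row of L^(I) has at most one nonzero entry, so L^(I)^T L^(I) = diag(d).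
   For t outside I the rows J_t of L^(I) are those of L: each carries the single
   entry w_t in a column c of G_t, and a column hit by s >= 1 such rows has
   d_c >= s w_t^2.  Since u = L^(I) diag(d)^-1 beta, this gives
   |w_t| ||u_{J_t}|| <= ||beta_{G_t}||.
   Once I^(k) = Ibar, a group t outside Ibar is never added, i.e. for all large k
   ||beta^(k)_{G_t}|| < w_t (Option I) or ||u^(k)_{J_t}|| < 1 (Option II).  Both
   quantities are norms of affine functions of x^(k), hence continuous, so the
   bounds survive the limit; under Option I the block estimate then bounds
   ||u_{J_t}|| by 1. *)

From Pilot Require Import Defs.
From mathcomp Require Import all_boot all_algebra all_classical all_reals all_analysis.
From mathcomp Require Import zify.
Import order.Order.TTheory GRing.Theory Num.Theory numFieldNormedType.Exports.
Local Open Scope ring_scope.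

Definition single_entry_rows {R : pzRingType} {p q : nat} (B : 'M[R]_(p, q)) :=
  forall r c c', B r c != 0 -> B r c' != 0 -> c = c'.

Lemma is_diag_tr_mulmx {R : pzRingType} {p q : nat} {B : 'M[R]_(p, q)} :
  single_entry_rows B -> is_diag_mx (B^T *m B).
Proof.
move=> B_single; apply/is_diag_mxP => g c gc; rewrite mxE big1 // => r _.
rewrite mxE; have [->|Brg] := eqVneq (B r g) 0; first by rewrite mul0r.
have [->|Brc] := eqVneq (B r c) 0; first by rewrite mulr0.
by move: gc; rewrite (B_single _ _ _ Brg Brc) eqxx.
Qed.

Lemma sqr_sum_single_entry (R : numDomainType) (I : finType) (a : I -> R) :
  (forall i j, a i != 0 -> a j != 0 -> i = j) ->
  (\sum_i a i) ^+ 2 = \sum_i a i ^+ 2.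
Proof.
move=> a_single; case: (pickP (fun i => a i != 0)) => [i ai|a0]; last first.
  have a_eq0 j : a j = 0 by move/negbT: (a0 j); rewrite negbK => /eqP.
  by rewrite !big1 ?expr0n // => j _; rewrite a_eq0 ?expr0n.
have aj0 j : j != i -> a j = 0.
  move=> ji; apply/eqP; apply: contraNT ji => aj; apply/eqP; exact: a_single aj ai.
rewrite (bigD1 i) //= [X in _ = X](bigD1 i) //= !big1 ?addr0 // => j /aj0 ->.
  by rewrite expr0n.
Qed.

Section Coordproj.
Context {R : realType}.

Lemma coordprojMl m k (S : {set 'I_m}) (X : 'M[R]_(m, k)) r c :
  (coordproj m S *m X) r c = if r \in S then X r c else 0.
Proof.
rewrite mxE (bigD1 r) //= big1 => [|j /negbTE jr]; last by rewrite mxE eq_sym jr mul0r.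
by rewrite mxE eqxx; case: (r \in S); rewrite ?mul1r ?mul0r addr0.
Qed.

Lemma coordprojMr m k (S : {set 'I_k}) (X : 'M[R]_(m, k)) r c :
  (X *m coordproj k S) r c = if c \in S then X r c else 0.
Proof.
rewrite mxE (bigD1 c) //= big1 => [|j /negbTE jc]; last by rewrite mxE jc mulr0.
by rewrite mxE eqxx; case: (c \in S); rewrite ?mulr1 ?mulr0 addr0.
Qed.

End Coordproj.

Section Blocks.
Context {R : realType} {n N : nat} {G : 'I_N -> {set 'I_n}} {w : 'I_N -> R}.

Lemma bstart_ltn (i j : 'I_N) : (i < j)%N -> (bstart G i + #|G i| <= bstart G j)%N.
Proof.
move=> ij; have -> : (bstart G i + #|G i| = \sum_(k < N | (k < i.+1)%N) #|G k|)%N.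
  rewrite (bigD1 i) //= addnC; congr (_ + _)%N.
  by apply: eq_bigl => k; rewrite ltnS ltn_neqAle andbC.
rewrite /bstart [X in (_ <= X)%N](bigID (fun k : 'I_N => (k < i.+1)%N)) /=.
rewrite [X in (_ <= X + _)%N](eq_bigl (fun k : 'I_N => (k < i.+1)%N)) ?leq_addr //.
by move=> k; apply/andb_idl => /leq_trans; apply.
Qed.

Lemma Jblk_inj {i j : 'I_N} {r} : r \in Jblk G i -> r \in Jblk G j -> i = j.
Proof.
rewrite !inE => /andP[ri1 ri2] /andP[rj1 rj2].
case: (ltngtP i j) => [/bstart_ltn|/bstart_ltn|/val_inj //]; lia.
Qed.

Lemma Jblk_offset t r : r \in Jblk G t -> (r - bstart G t < #|G t|)%N.
Proof. by rewrite inE => /andP[]; lia. Qed.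

Lemma Lmx_Jblk {t r} c : r \in Jblk G t ->
  Lmx G w r c =
    if val c == nth 0%N (map val (enum (G t))) (r - bstart G t) then w t else 0.
Proof.
move=> rt; rewrite mxE (bigD1 t) //= big1 => [|i it].
  by move: (rt); rewrite inE => -> /=; rewrite addr0.
case: ifP => // /andP[ri _].
have ri' : r \in Jblk G i by rewrite inE.
by move: it; rewrite (Jblk_inj ri' rt) eqxx.
Qed.

Lemma Lmx_neq0_Jblk {r c} : Lmx G w r c != 0 -> exists t, r \in Jblk G t.
Proof.
case: (pickP (fun t => r \in Jblk G t)) => [t rt _|noJ]; first by exists t.
by rewrite mxE big1 ?eqxx // => i _; have := noJ i; rewrite inE => ->.
Qed.

Lemma Lmx_Jblk_neq0 {t r c} : r \in Jblk G t -> Lmx G w r c != 0 ->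
  Lmx G w r c = w t /\ c \in G t.
Proof.
move=> rt; rewrite (Lmx_Jblk _ rt); case: ifP => [/eqP cE _|_]; last by rewrite eqxx.
split=> //; rewrite -mem_enum -(mem_map val_inj) cE mem_nth // size_map -cardE.
exact: Jblk_offset rt.
Qed.

Lemma Lmx_single_entry_rows : single_entry_rows (Lmx G w).
Proof.
move=> r c c' Lc Lc'; have [t rt] := Lmx_neq0_Jblk Lc.
move: Lc Lc'; rewrite !(Lmx_Jblk _ rt).
by do 2![case: ifP => [/eqP|]; last by rewrite eqxx] => <- /val_inj.
Qed.

Lemma Lhat_entry (I : {set 'I_N}) r c : Lhat G w I r c =
  if (r \in Ezset G I) && (c \notin Eset G I) then 0 else Lmx G w r c.
Proof.
rewrite mxE [X in _ + X]mxE /P_Tperp coordprojMr /P_Tz coordprojMl inE.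
by case: (r \in Ezset G I); case: (c \notin Eset G I); rewrite /= ?subr0 ?subrr.
Qed.

Lemma Lhat_single_entry_rows (I : {set 'I_N}) : single_entry_rows (Lhat G w I).
Proof.
move=> r c c'; rewrite !Lhat_entry.
do 2![case: ifP => _; first by rewrite eqxx].
exact: Lmx_single_entry_rows.
Qed.

Lemma Lhat_Jblk (I : {set 'I_N}) {t r} c :
  t \notin I -> r \in Jblk G t -> Lhat G w I r c = Lmx G w r c.
Proof.
move=> tI rt; rewrite Lhat_entry; case: ifP => // /andP[/bigcupP[s sI rs] _].
by move: tI; rewrite -(Jblk_inj rs rt) sI.
Qed.

Lemma Lhat_Jblk_col {I : {set 'I_N}} {t c} : t \notin I ->
  \sum_(r in Jblk G t) Lhat G w I r c ^+ 2 != 0 ->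
  c \in G t /\ w t ^+ 2 <= \sum_(r in Jblk G t) Lhat G w I r c ^+ 2.
Proof.
move=> tI; rewrite psumr_neq0 => [/hasP[r _ /andP[rt]]|r _]; last exact: sqr_ge0.
move=> /lt0r_neq0; rewrite sqrf_eq0 (Lhat_Jblk _ _ tI rt).
move=> /(Lmx_Jblk_neq0 rt)[Lrc cG].
split=> //; rewrite (bigD1 r) //= (Lhat_Jblk _ _ tI rt) Lrc lerDl.
by apply: sumr_ge0 => r' _; exact: sqr_ge0.
Qed.

Lemma sumsq_uof_le (I : {set 'I_N}) t (beta : 'cV[R]_n) :
  (Lhat G w I)^T *m Lhat G w I \in unitmx -> t \notin I ->
  w t ^+ 2 * \sum_(r in Jblk G t) (uof G w I beta r 0) ^+ 2
    <= \sum_(g in G t) (beta g 0) ^+ 2.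
Proof.
move=> hU tI; set Lb := Lhat G w I; set v := invmx (Lb^T *m Lb) *m beta.
have /diag_mxP[d Md] := is_diag_tr_mulmx (Lhat_single_entry_rows I).
have betaE g : beta g 0 = d 0 g * v g 0.
  by rewrite -[beta](mulKVmx hU) -/v Md mul_diag_mx mxE.
have dE g : d 0 g = \sum_r Lb r g ^+ 2.
  have := congr1 (fun M : 'M[R]_n => M g g) Md; rewrite /= [RHS]mxE eqxx mulr1n => <-.
  by rewrite mxE; apply: eq_bigr => r _; rewrite mxE expr2.
have uE r : uof G w I beta r 0 ^+ 2 = \sum_c Lb r c ^+ 2 * v c 0 ^+ 2.
  have -> : uof G w I beta = Lb *m v by rewrite /uof mulmxA.
  rewrite mxE sqr_sum_single_entry => [|c c']; first by under eq_bigr do rewrite exprMn.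
  rewrite !mulf_eq0 !negb_or => /andP[+ _] /andP[+ _].
  exact: Lhat_single_entry_rows.
rewrite (eq_bigr _ (fun r _ => uE r)) exchange_big /= mulr_sumr.
rewrite [X in _ <= X]big_mkcond /=; apply: ler_sum => c _.
rewrite -mulr_suml betaE dE mulrA.
(* The column mass S is 0 or at least w_t^2, and S <= d_c: so w_t^2 S <= S^2 <= d_c^2,
   whether or not several rows of J_t share the column c. *)
have [S0|/(Lhat_Jblk_col tI)[cG wS]] := eqVneq (\sum_(r in Jblk G t) Lb r c ^+ 2) 0.
  by rewrite S0 mulr0 mul0r; case: ifP => // _; exact: sqr_ge0.
rewrite cG exprMn ler_wpM2r ?sqr_ge0 // expr2.
set S := \sum_(r in Jblk G t) _; set D := \sum_r _.
have SD : S <= D.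
  rewrite /D (bigID (mem (Jblk G t))) /= lerDl.
  by apply: sumr_ge0 => r _; exact: sqr_ge0.
apply: ler_pM => //; first exact: sqr_ge0.
  exact: le_trans (sqr_ge0 _) wS.
exact: le_trans wS SD.
Qed.

Lemma jnorm_uof_le {I : {set 'I_N}} {t} (beta : 'cV[R]_n) :
  (Lhat G w I)^T *m Lhat G w I \in unitmx -> t \notin I ->
  `|w t| * jnorm G (uof G w I beta) t <= Defs.gnorm G beta t.
Proof.
(* Plain [gnorm] is shadowed by a MathComp lemma of that name. *)
move=> hU tI; rewrite /jnorm /Defs.gnorm -sqrtr_sqr -sqrtrM ?sqr_ge0 //.
exact/ler_wsqrtr/sumsq_uof_le.
Qed.

End Blocks.

Section Limits.
Context {R : realType}.

Lemma continuous_sqrt_sumsq_affine q k (S : {set 'I_q}) (K : 'M[R]_(q, k))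
    (b : 'cV[R]_q) :
  continuous (fun x : 'cV[R]_k => Num.sqrt (\sum_(r in S) ((K *m x + b) r 0) ^+ 2)).
Proof.
have entry r : continuous (fun x : 'cV[R]_k => (K *m x + b) r 0).
  have -> : (fun x : 'cV[R]_k => (K *m x + b) r 0) =
            (fun x => \sum_j K r j * x j 0 + b r 0).
    by apply: funext => x; rewrite !mxE.
  move=> x; apply: continuousD; last exact: cst_continuous.
  apply: (continuous_big add_continuous) => j _ y.
  by apply: continuousM; [exact: cst_continuous | exact: coord_continuous].
have sumsq : continuous (fun x : 'cV[R]_k => \sum_(r in S) ((K *m x + b) r 0) ^+ 2).
  apply: (continuous_big add_continuous) => r _ x.
  exact: (continuous_comp (entry r x) (@exprn_continuous _ 2 _)).
by move=> x; exact: (continuous_comp (sumsq x) (@sqrt_continuous R _)).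
Qed.

Lemma continuous_cvg_le {T : topologicalType} {f : T -> R} {u : nat -> T}
    {x : T} {c : R} :
  continuous f -> (u @ \oo --> x)%classic ->
  (\forall k \near \oo, f (u k) <= c)%classic -> f x <= c.
Proof. by move=> fc ux; apply: ler_cvg_to (continuous_cvg _ (fc x) ux) (cvg_cst c). Qed.

End Limits.

Section DualCertificate.
Context {R : realType} {n N m : nat}.
Variables (G : 'I_N -> {set 'I_n}) (w : 'I_N -> R).
Variables (A : 'M[R]_(m, n)) (y : 'cV[R]_m) (lambda : R).

Lemma betaofE x : betaof m A y lambda x =
  (- lambda^-1 *: (A^T *m A)) *m x + lambda^-1 *: (A^T *m y).
Proof. by rewrite /betaof mulmxBr mulmxA scalerBr opprB addrC -scalemxAl scaleNr. Qed.

Lemma continuous_gnorm_betaof t :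
  continuous (fun x => Defs.gnorm G (betaof m A y lambda x) t).
Proof.
rewrite /Defs.gnorm; under eq_fun do rewrite betaofE.
exact: continuous_sqrt_sumsq_affine.
Qed.

Lemma continuous_jnorm_uof_betaof (I : {set 'I_N}) t :
  continuous (fun x => jnorm G (uof G w I (betaof m A y lambda x)) t).
Proof.
rewrite /jnorm /uof; under eq_fun do rewrite betaofE mulmxDr mulmxA.
exact: continuous_sqrt_sumsq_affine.
Qed.

End DualCertificate.

Theorem lemma4p1 (R : realType) (n N m : nat)
  (G : 'I_N -> {set 'I_n}) (w : 'I_N -> R)
  (A : 'M[R]_(m, n)) (y : 'cV[R]_m) (lambda : R)
  (Iseq : nat -> {set 'I_N}) (xseq : nat -> 'cV[R]_n)
  (Ibar : {set 'I_N}) (xt : 'cV[R]_n) :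
  (forall i, G i != finset.set0) ->
  \bigcup_(i < N) G i = [set: 'I_n] ->
  (forall i, 0 < w i) ->
  0 < lambda ->
  (forall I : {set 'I_N}, (Lhat G w I)^T *m Lhat G w I \in unitmx) ->
  ((forall k, Iseq k.+1 = updateI G w (Iseq k) (betaof _ A y lambda (xseq k.+1)))
   \/
   (forall k, Iseq k.+1 = updateII G w (Iseq k) (betaof _ A y lambda (xseq k.+1)))) ->
  (exists K, forall k, (K <= k)%N -> Iseq k = Ibar) ->
  (xseq @ \oo --> xt)%classic ->
  forall t : 'I_N, t \notin Ibar ->
    jnorm G (uof G w Ibar (betaof _ A y lambda xt)) t <= 1.
Proof.
move=> _ _ w_gt0 _ hU hupd [K IK] hx t tI.
have t_out k : (K <= k)%N -> t \notin Iseq k.+1 by move=> /leqW/IK ->.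
have limit_le (f : 'cV[R]_n -> R) c : continuous f ->
    (forall k, (K <= k)%N -> f (xseq k.+1) < c) -> f xt <= c.
  move=> fc fK; apply: (continuous_cvg_le fc hx).
  by exists K.+1 => // -[|k] //= Kk; apply/ltW/fK.
case: hupd => hI.
- have gnorm_le : Defs.gnorm G (betaof _ A y lambda xt) t <= w t.
    apply: limit_le (continuous_gnorm_betaof G A y lambda t) _ => k Kk.
    by move: (t_out k Kk); rewrite hI !inE negb_or -ltNge => /andP[].
  have := le_trans (jnorm_uof_le _ (hU Ibar) tI) gnorm_le.
  by rewrite gtr0_norm // -[X in _ <= X]mulr1 ler_pM2l.
- apply: limit_le (continuous_jnorm_uof_betaof G w A y lambda Ibar t) _ => k Kk.
  by move: (t_out k Kk); rewrite hI (IK k) // !inE negb_or -ltNge => /andP[].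
Qed.
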